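(* For all relatively prime integers $p \geq 1$ and $q$, one has $\Delta(p,q) \leq p/4$, where $\Delta(p,q) = \max \mathcal{D}(L(p,q)) - \min \mathcal{D}(L(p,q))$.
   Context: $L(p,q)$ denotes the lens space obtained by $p/q$ Dehn surgery on the unknot in $S^3$. For a rational homology sphere $Y$, $\mathcal{D}(Y)$ denotes the multiset of Heegaard Floer correction terms $d(Y,\mathfrak{s})$, $\mathfrak{s} \in \mathrm{Spin}^c(Y)$, so $\Delta(p,q)$ is the range (maximum minus minimum) of the correction terms of $L(p,q)$. *)

From HB Require Import structures.
From mathcomp Require Import all_boot all_order all_algebra.
Set Implicit Arguments. Unset Strict Implicit. Unset Printing Implicit Defensive.
Import Order.TTheory GRing.Theory Num.Theory.
Local Open Scope ring_scope.

(* Heegaard Floer correction terms of lens spaces, via the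
   Ozsvath--Szabo recursion (Absolutely graded Floer homologies, Prop. 4.8):
     d(L(p,q), i) = -1/4 + (2i+1-p-q)^2/(4pq) - d(L(q,r), j),
   for p > q > 0 coprime, r = p mod q, j = i mod q, 0 <= i < p,
   with d(L(1,0), 0) = d(S^3) = 0.  Spin^c structures are labelled by
   i in {0,...,p-1}.  [fuel] bounds the recursion depth (fuel = p suffices,
   since q < p decreases strictly). *)
Fixpoint lens_d_aux (fuel p q i : nat) : rat :=
  match fuel with
  | 0%N => 0
  | fuel'.+1 =>
      if q == 0%N then 0 else
      let x : int := (2 * i + 1)%:Z - p%:Z - q%:Z in
      - (1 / 4) + (x ^+ 2)%:~R / (4 * (p * q)%:R)
        - lens_d_aux fuel' q (p %% q) (i %% q)
  end.

Definition lens_q (p : nat) (q : int) : nat := absz (q %% p%:Z)%Z.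

Definition lens_d (p : nat) (q : int) (i : nat) : rat :=
  lens_d_aux p p (lens_q p q) i.

Definition lens_D (p : nat) (q : int) : seq rat :=
  [seq lens_d p q i | i <- iota 0 p].

Definition lens_Delta (p : nat) (q : int) : rat :=
  let s := lens_D p q in
  \big[Num.max/head 0 s]_(x <- s) x - \big[Num.min/head 0 s]_(x <- s) x.

From mathcomp Require Import all_boot all_order all_algebra.
From mathcomp Require Import ring lra zify.
Set Implicit Arguments. Unset Strict Implicit. Unset Printing Implicit Defensive.
Import Order.TTheory GRing.Theory Num.Theory.
Local Open Scope ring_scope.

(* Put m = min(q, p - q).  Unfolding the recursion once (if 2q <= p, so m = q) or
   twice (if p < 2q, so m = p - q) writes d(L(p,q), i) as a constant, plus or minus
   Z_i / (4pm) with 0 <= Z_i <= (p + m - 1)^2, plus or minus a correction term of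
   some L(m, s).  By induction the correction terms of L(m, s) spread by at most
   m/4, so those of L(p,q) spread by at most (p + m - 1)^2/(4pm) + m/4, which is
   at most p/4 because (p + m - 1)^2 <= pm(p - m) for p > 2m >= 6, and also for
   m = 2 and p >= 7.  What is left is m = 1, where L(1,0) contributes nothing,
   and L(5,2), L(5,3), whose correction terms are computed directly. *)

Section Spread.
Variable R : realDomainType.
Implicit Types (f g : nat -> R) (b c : R).

Definition spread_le (p : nat) f b :=
  forall i j, (i < p)%N -> (j < p)%N -> f i - f j <= b.

Lemma spread_le_range p f lo b :
  (forall i, (i < p)%N -> lo <= f i <= lo + b) -> spread_le p f b.
Proof. by move=> hf i j /hf/andP[_ ?] /hf/andP[? _]; lra. Qed.

Lemma spread_le_trans p f b c : spread_le p f b -> b <= c -> spread_le p f c.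
Proof. by move=> hf bc i j hi hj; apply: le_trans bc; apply: hf. Qed.

Lemma spread_le_offset p f g lo b c :
  (forall i, (i < p)%N -> lo <= f i - g i <= lo + b) -> spread_le p g c ->
  spread_le p f (b + c).
Proof.
move=> hfg hg i j hi hj; have := hg i j hi hj.
by move: (hfg i hi) (hfg j hj) => /andP[_ ?] /andP[? _]; lra.
Qed.

Lemma spread_leN p f b : spread_le p f b -> spread_le p (fun i => - f i) b.
Proof. by move=> hf i j hi hj; rewrite opprK addrC; apply: hf. Qed.

Lemma spread_le_comp p m f (h : nat -> nat) b :
  (forall i, (i < p)%N -> (h i < m)%N) -> spread_le m f b ->
  spread_le p (fun i => f (h i)) b.
Proof. by move=> hm hf i j hi hj; apply: hf; apply: hm. Qed.

Lemma bigmax_sub_bigmin_le (s : seq R) b : s != [::] ->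
  (forall x y, x \in s -> y \in s -> x - y <= b) ->
  \big[Num.max/head 0 s]_(x <- s) x - \big[Num.min/head 0 s]_(x <- s) x <= b.
Proof.
case: s => [|x0 s] // _ hs.
have in_s (op : R -> R -> R) : (forall a c, op a c = a \/ op a c = c) ->
    \big[op/x0]_(x <- x0 :: s) x \in x0 :: s.
  move=> hop; rewrite big_seq.
  apply: (big_ind (fun y => y \in x0 :: s)) => //; first exact: mem_head.
  by move=> a c ha hc; case: (hop a c) => ->.
apply: hs; apply: in_s => a c.
- by rewrite maxEle; case: ifP; auto.
- by rewrite minEle; case: ifP; auto.
Qed.

End Spread.

Definition lens_sq (p q i : nat) : rat := ((2 * i + 1)%:R - p%:R - q%:R) ^+ 2.

Lemma lens_d_aux0 n p i : lens_d_aux n p 0 i = 0.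
Proof. by case: n. Qed.

Lemma lens_d_auxS n p q i : (0 < q)%N ->
  lens_d_aux n.+1 p q i =
  - (1 / 4) + lens_sq p q i / (4 * (p%:R * q%:R)) - lens_d_aux n q (p %% q) (i %% q).
Proof.
case: q => // q _; rewrite /= /lens_sq natrM rmorphXn /= !rmorphB /=.
by rewrite !pmulrn.
Qed.

Lemma sqr_le_sqr_of_bounds (R : realDomainType) (x b : R) :
  - b <= x <= b -> x ^+ 2 <= b ^+ 2.
Proof. by case/andP; nra. Qed.

Lemma lens_sq_le p q i : (i < p)%N -> lens_sq p q i <= (p%:R + q%:R - 1) ^+ 2.
Proof.
move=> ip; have {ip} : i%:R + 1 <= p%:R :> rat by rewrite natr1 ler_nat.
have := ler0n rat i; have := ler0n rat q.
by rewrite /lens_sq natrD natrM => *; apply: sqr_le_sqr_of_bounds; apply/andP; split; lra.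
Qed.

(* The quadratic terms of two consecutive steps L(q+r, q) -> L(q, r) -> L(r, _)
   merge into a single one; here e = i / q, so i = j + e q with j = i mod q. *)
Lemma lens_sq_two_steps (q r j e : nat) : (0 < r)%N -> (r < q)%N -> (e <= 1)%N ->
  lens_sq (q + r) q (j + e * q) / (4 * ((q + r)%:R * q%:R))
    - lens_sq q r j / (4 * (q%:R * r%:R))
  = 1 / 4 - ((2 * j + 1)%:R - q%:R - (2 * e * r)%:R) ^+ 2 / (4 * ((q + r)%:R * r%:R)).
Proof.
rewrite -!(ltr_nat rat) => r0 rq e1.
have q0 : q%:R != 0 :> rat by rewrite gt_eqF //; lra.
have qr0 : (q + r)%:R != 0 :> rat by rewrite natrD gt_eqF //; lra.
rewrite /lens_sq; case: e e1 => [|[|]] // _; rewrite ?muln0 ?mul0n ?muln1 ?mul1n ?addn0.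
all: rewrite ?natrD ?natrM ?mulr0 ?mulr1 ?mul0r ?addr0; field.
all: by rewrite q0 -natrD qr0 gt_eqF.
Qed.

Lemma lens_d_aux_two_steps n q r i : (0 < r)%N -> (r < q)%N -> (i < q + r)%N ->
  exists2 Z, 0 <= Z <= ((q + r)%:R + r%:R - 1) ^+ 2 &
  lens_d_aux n.+2 (q + r) q i
    = 1 / 4 - Z / (4 * ((q + r)%:R * r%:R)) + lens_d_aux n r (q %% r) (i %% q %% r).
Proof.
move=> r0 rq ip; have q0 : (0 < q)%N := ltn_trans r0 rq.
have ei : i = (i %% q + i %/ q * q)%N by rewrite addnC -divn_eq.
have e1 : (i %/ q <= 1)%N by rewrite -ltnS ltn_divLR //; lia.
have jq : (i %% q < q)%N := ltn_pmod i q0.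
exists (((2 * (i %% q) + 1)%:R - q%:R - (2 * (i %/ q) * r)%:R) ^+ 2).
  rewrite sqr_ge0 /=; apply: sqr_le_sqr_of_bounds.
  have : (i %% q)%:R + 1 <= q%:R :> rat by rewrite natr1 ler_nat.
  have : (i %/ q)%:R <= 1 :> rat by rewrite lern1.
  have := ler0n rat (i %% q); have := ler0n rat (i %/ q); have := ler0n rat r.
  rewrite !natrD !natrM => *; apply/andP; split; nra.
have rmod : ((q + r) %% q = r)%N by rewrite modnDl modn_small.
rewrite lens_d_auxS // rmod lens_d_auxS //.
have := @lens_sq_two_steps q r (i %% q) _ r0 rq e1; rewrite -ei; lra.
Qed.

Lemma lens_d_aux_spread_step n p q T : (0 < q)%N ->
  spread_le q (lens_d_aux n q (p %% q)) T ->
  spread_le p (lens_d_aux n.+1 p q)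
    ((p%:R + q%:R - 1) ^+ 2 / (4 * (p%:R * q%:R)) + T).
Proof.
move=> q0 hT; apply: (spread_le_offset (g := fun i => - lens_d_aux n q (p %% q) (i %% q))
  (lo := - (1 / 4))); last by apply: spread_leN; apply: spread_le_comp hT => i _; apply: ltn_pmod.
move=> i ip; rewrite lens_d_auxS // opprK subrK lerDl lerD2l.
have K0 : 0 <= (4 * (p%:R * q%:R) : rat)^-1 by rewrite invr_ge0 !mulr_ge0.
by rewrite mulr_ge0 ?sqr_ge0 //= ler_wpM2r // lens_sq_le.
Qed.

Lemma lens_d_aux_spread_two_steps n q r T : (0 < r)%N -> (r < q)%N ->
  spread_le r (lens_d_aux n r (q %% r)) T ->
  spread_le (q + r) (lens_d_aux n.+2 (q + r) q)
    (((q + r)%:R + r%:R - 1) ^+ 2 / (4 * ((q + r)%:R * r%:R)) + T).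
Proof.
move=> r0 rq hT; apply: (spread_le_offset (g := fun i => lens_d_aux n r (q %% r) (i %% q %% r))
  (lo := 1 / 4 - ((q + r)%:R + r%:R - 1) ^+ 2 / (4 * ((q + r)%:R * r%:R)))); last first.
  by apply: spread_le_comp hT => i _; apply: ltn_pmod.
move=> i ip; have [Z /andP[Z0 ZB] ->] := lens_d_aux_two_steps n r0 rq ip.
have K0 : 0 <= (4 * ((q + r)%:R * r%:R) : rat)^-1 by rewrite invr_ge0 !mulr_ge0.
have : 0 <= Z / (4 * ((q + r)%:R * r%:R)) by rewrite mulr_ge0.
have := ler_wpM2r K0 ZB; rewrite -!mulrA; lra.
Qed.

Lemma sqr_le_mul_sub (R : realDomainType) (P M : R) : 3 <= M -> 2 * M + 1 <= P ->
  (P + M - 1) ^+ 2 <= P * M * (P - M).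
Proof.
move=> hM hP.
have h1 : 0 <= (M - 3) * (P - 2 * M - 1) by nra.
have h2 : 0 <= (M - 3) * (M - 3) * (P - 2 * M - 1) by nra.
have h3 : 0 <= (P - 2 * M - 1) * (P - 2 * M - 1) * M by nra.
nra.
Qed.

(* 0 rather than 1/4 for S^3 = L(1,0): this is what makes the case m = 1 close. *)
Definition lens_spread_bound (p : nat) : rat := if p == 1%N then 0 else p%:R / 4.

Lemma lens_spread_bound_le p : lens_spread_bound p <= p%:R / 4.
Proof. by rewrite /lens_spread_bound; case: eqP => // _; rewrite divr_ge0. Qed.

Lemma lens_step_bound_le p m : (0 < m)%N -> (2 * m <= p)%N ->
  (1 < m -> 2 * m < p)%N -> (m = 2 -> 7 <= p)%N ->
  (p%:R + m%:R - 1) ^+ 2 / (4 * (p%:R * m%:R)) + lens_spread_bound m <= p%:R / 4.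
Proof.
move=> m0 mp mp1 m2; have p0 : p%:R != 0 :> rat by rewrite pnatr_eq0 -lt0n; lia.
rewrite /lens_spread_bound; case: eqP => [->|m1].
  rewrite addr0 addrK mulr1.
  suff -> : p%:R ^+ 2 / (4 * p%:R) = p%:R / 4 :> rat by [].
  by field.
have key : (p%:R + m%:R - 1) ^+ 2 <= p%:R * m%:R * (p%:R - m%:R) :> rat.
  case: (m =P 2%N) => [e2|m_ne2].
    have := m2 e2; rewrite e2 -(ler_nat rat) => h7; nra.
  apply: sqr_le_mul_sub; first by rewrite (ler_nat rat 3); lia.
  have : (2 * m + 1)%:R <= p%:R :> rat by rewrite ler_nat; lia.
  by rewrite natrD natrM.
rewrite -subr_ge0.
have -> : p%:R / 4 - ((p%:R + m%:R - 1) ^+ 2 / (4 * (p%:R * m%:R)) + m%:R / 4)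
  = (p%:R * m%:R * (p%:R - m%:R) - (p%:R + m%:R - 1) ^+ 2) / (4 * (p%:R * m%:R)) :> rat.
  by field; rewrite p0 pnatr_eq0 -lt0n m0.
by rewrite divr_ge0 ?subr_ge0 // !mulr_ge0.
Qed.

(* The only coprime pairs with m >= 2 for which (p + m - 1)^2 <= pm(p - m) fails. *)
Definition lens_exceptional (p q : nat) := (p == 5%N) && ((q == 2%N) || (q == 3%N)).

Lemma lens_d_aux_exceptional_range n p q i : lens_exceptional p q -> (p <= n)%N -> (i < p)%N ->
  - (2 / 5) <= lens_d_aux n p q i <= 2 / 5.
Proof.
case/andP=> /eqP -> /orP[] /eqP ->; case: n => [|[|[|[|n]]]] // _.
  rewrite lens_d_auxS // -[(5 %% 2)%N]/1%N lens_d_auxS // -[(2 %% 1)%N]/0%N lens_d_aux0.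
  by case: i => [|[|[|[|[|i]]]]] // _; rewrite /lens_sq /=; apply/andP; split; lra.
rewrite lens_d_auxS // -[(5 %% 3)%N]/2%N lens_d_auxS // -[(3 %% 2)%N]/1%N.
rewrite lens_d_auxS // -[(2 %% 1)%N]/0%N lens_d_aux0.
by case: i => [|[|[|[|[|i]]]]] // _; rewrite /lens_sq /=; apply/andP; split; lra.
Qed.

Lemma odd_ltn_leq2 m n : odd m -> odd n -> (m < n)%N -> (m.+2 <= n)%N.
Proof.
move=> om on; rewrite leq_eqVlt => /orP[/eqP e|//].
by move: on; rewrite -e /= om.
Qed.

Lemma lens_step_bound_le_small p q : (0 < q)%N -> (2 * q <= p)%N -> coprime p q ->
  ~~ lens_exceptional p q ->
  (p%:R + q%:R - 1) ^+ 2 / (4 * (p%:R * q%:R)) + lens_spread_bound q <= p%:R / 4.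
Proof.
move=> q0 small cop not_exc; apply: lens_step_bound_le => // [q1 | q2].
  rewrite ltn_neqAle small andbT; apply/eqP => p2q.
  by move: cop; rewrite -p2q coprimeMl /coprime gcdnn => /andP[_ /eqP q1']; lia.
have odd_p : odd p by rewrite -coprimen2 -q2.
have p_ge5 : (5 <= p)%N by apply: (@odd_ltn_leq2 3) => //; lia.
have p_ne5 : p != 5%N by apply: contraNneq not_exc => ->; rewrite q2.
by apply: (@odd_ltn_leq2 5) => //; lia.
Qed.

Lemma lens_step_bound_le_large q r : (0 < r)%N -> (r < q)%N -> coprime r q ->
  ~~ lens_exceptional (q + r) q ->
  ((q + r)%:R + r%:R - 1) ^+ 2 / (4 * ((q + r)%:R * r%:R)) + lens_spread_bound r
    <= (q + r)%:R / 4.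
Proof.
move=> r0 rq cop not_exc; apply: lens_step_bound_le => // [|_|r2]; try lia.
have odd_q : odd q by rewrite -coprime2n -r2.
have q_ge3 : (3 <= q)%N by apply: (@odd_ltn_leq2 1) => //; lia.
have q_ne3 : q != 3%N by apply: contraNneq not_exc => ->; rewrite r2.
suff : (5 <= q)%N by lia.
by apply: (@odd_ltn_leq2 3) => //; lia.
Qed.

Lemma lens_d_aux_spread n p q : (p <= n)%N -> (q < p)%N -> coprime p q ->
  spread_le p (lens_d_aux n p q) (lens_spread_bound p).
Proof.
elim/ltn_ind: n p q => n IH p q pn qp cop.
case: (posnP q) => [q0 | q_gt0].
  have p1 : p = 1%N by apply/eqP; move: cop; rewrite q0 /coprime gcdn0.
  rewrite q0 p1; apply: (spread_le_range (lo := 0)) => i _.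
  by rewrite lens_d_aux0 addr0 lexx.
have -> : lens_spread_bound p = p%:R / 4.
  by rewrite /lens_spread_bound ifN //; apply/eqP; lia.
have [exc | not_exc] := boolP (lens_exceptional p q).
  have /andP[/eqP p5 _] := exc.
  apply: (@spread_le_trans _ _ _ (4 / 5)); last by rewrite p5; lra.
  apply: (spread_le_range (lo := - (2 / 5))) => i ip.
  by have /andP[] := lens_d_aux_exceptional_range exc pn ip => *; apply/andP; split; lra.
case: (leqP (2 * q) p) => [small | large].
  case: n IH pn => [|n] IH pn; first lia.
  apply: (spread_le_trans (lens_d_aux_spread_step (T := lens_spread_bound q) q_gt0 _)).
    apply: IH; [lia | lia | exact: ltn_pmod | by rewrite coprime_modr coprime_sym].
  exact: lens_step_bound_le_small.
have [r def_p] : exists r, p = (q + r)%N by exists (p - q)%N; lia.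
subst p; have r0 : (0 < r)%N by lia.
have rq : (r < q)%N by lia.
have cop_rq : coprime r q by rewrite -(modn_small rq) -modnDl coprime_modl.
case: n IH pn => [|[|n]] IH pn; try lia.
apply: (spread_le_trans (lens_d_aux_spread_two_steps (T := lens_spread_bound r) r0 rq _)).
  by apply: IH; [lia | lia | exact: ltn_pmod | rewrite coprime_modr].
exact: lens_step_bound_le_large.
Qed.

Lemma lens_q_lt p q : (0 < p)%N -> (lens_q p q < p)%N.
Proof.
move=> p0; have pz : p%:Z != 0 by rewrite -lt0n.
rewrite -ltz_nat /lens_q gez0_abs ?modz_ge0 //.
by rewrite ltz_pmod // ltz_nat.
Qed.

Lemma coprime_lens_q p q : coprimez p%:Z q -> coprime p (lens_q p q).
Proof. by rewrite /coprimez -gcdz_modr. Qed.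

Theorem lemma3p1 (p : nat) (q : int) :
  (1 <= p)%N -> coprimez p%:Z q ->
  lens_Delta p q <= p%:R / 4.
Proof.
move=> p0 cop; apply: bigmax_sub_bigmin_le.
  by rewrite -size_eq0 size_map size_iota -lt0n.
move=> _ _ /mapP[i] + -> /mapP[j] + ->; rewrite !mem_iota /= => ip jp.
have := lens_d_aux_spread (leqnn p) (lens_q_lt q p0) (coprime_lens_q cop).
by move/spread_le_trans/(_ (lens_spread_bound_le p)); apply.
Qed.
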